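(* Let $m\ge 0$, $n=3m+2$, and $t\ge 1$. Then there is a homotopy equivalence $I(G_{n,t})\simeq I(G_{n,t}\setminus a_{t-1})$.
   Context: For a finite simple graph $G$, $I(G)$ is its independence complex (simplicial complex on $V(G)$ whose simplices are the independent sets); $G\setminus v$ is the induced subgraph on $V(G)\setminus\{v\}$. For integers $n\ge 2$, $t\ge 0$, the graph $G_{n,t}$ has vertex set $\{a_0,\dots,a_t\}\cup\{b_{i,j},c_{i,j}: 1\le i\le t,\ 1\le j\le n-1\}$, and its edges are exactly: $b_{i,j}\sim b_{i,j+1}$ and $c_{i,j}\sim c_{i,j+1}$ for $1\le i\le t$, $1\le j\le n-2$; $b_{i,n-1}\sim b_{i+1,1}$ and $c_{i,n-1}\sim c_{i+1,1}$ for $1\le i\le t-1$; and $a_{i-1}\sim b_{i,1}$, $a_{i-1}\sim c_{i,1}$, $a_i\sim b_{i,n-1}$, $a_i\sim c_{i,n-1}$ for $1\le i\le t$. *)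

From HB Require Import structures.
From mathcomp Require Import all_boot all_order all_algebra.
From mathcomp Require Import all_classical all_reals.
From mathcomp Require Import topology_structure product_topology subtype_topology subspace_topology
  function_spaces topology normedtype.
Set Implicit Arguments. Unset Strict Implicit. Unset Printing Implicit Defensive.
Import Order.TTheory GRing.Theory Num.Theory.
Import numFieldNormedType.Exports.
Local Open Scope classical_set_scope.
Local Open Scope ring_scope.

(* A finite simple graph is a symmetric irreflexive relation e on a finType. *)

Definition independent {T : finType} (e : rel T) (S : {set T}) : bool :=
  [forall x in S, forall y in S, ~~ e x y].

Definition del_vertex {T : finType} (e : rel T) (v : T) : rel {x : T | x != v} :=
  fun x y => e (val x) (val y).

(* Geometric realization of a simplicial complex on the finite vertex set T,
   given by its (downward-closed) family of faces [K]: the points of the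
   standard simplex in R^T (with the product topology) whose support is a face. *)
Definition realization (R : realType) {T : finType} (K : pred {set T})
  : set {ptws T -> R} :=
  [set f : {ptws T -> R} | (forall v, 0 <= f v) /\ \sum_(v : T) f v = 1
                           /\ K (finset (fun v => f v != 0))].
Arguments realization R {T} K.

Definition indep_complex_space (R : realType) {T : finType} (e : rel T) : topologicalType :=
  set_type (realization R (independent e)).

Definition unit_cyl (R : realType) (X : Type) : set (R * X) :=
  [set p | 0 <= p.1 <= 1].


Definition homotopic (R : realType) {X Y : topologicalType} (h k : X -> Y) : Prop :=
  exists H : R * X -> Y,
    {within @unit_cyl R X, continuous H} /\
    (forall x, H (0, x) = h x) /\ (forall x, H (1, x) = k x).
Arguments homotopic R {X Y} h k.

Definition homotopy_equivalent (R : realType) (X Y : topologicalType) : Prop :=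
  exists (f : X -> Y) (g : Y -> X),
    continuous f /\ continuous g /\
    homotopic R (g \o f) idfun /\ homotopic R (f \o g) idfun.

(* The graph G_{n,t}.  Vertex type:
   inl k          = a_k              (0 <= k <= t)
   inr (i, j, true)  = b_{i+1, j+1}  (0 <= i < t, 0 <= j < n-1)
   inr (i, j, false) = c_{i+1, j+1}                                   *)
Definition Gvert (n t : nat) : finType := ('I_t.+1 + ('I_t * 'I_n.-1 * bool))%type.

(* one orientation of each edge *)
Definition Gadj (n t : nat) (u w : Gvert n t) : bool :=
  match u, w with
  | inr (i, j, s), inr (i', j', s') =>
      (s == s') &&
      (((i == i' :> nat) && (j'== j.+1 :> nat)) ||
       ((i' == i.+1 :> nat) && (j == (n - 2)%N :> nat) && (j' == 0 :> nat)))
  | inl k, inr (i, j, _) =>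
      ((k == i :> nat) && (j == 0 :> nat)) ||
      ((k == i.+1 :> nat) && (j == (n - 2)%N :> nat))
  | _, _ => false
  end.

Definition Gedge (n t : nat) : rel (Gvert n t) :=
  fun u w => Gadj u w || Gadj w u.

Definition Ga (n t k : nat) : Gvert n t := inl (inord k).
Arguments Gadj : clear implicits.
Arguments Gedge : clear implicits.
Arguments Ga : clear implicits.
Arguments del_vertex {T} e v.

From HB Require Import structures.
From mathcomp Require Import all_boot all_order all_algebra.
From mathcomp Require Import all_classical all_reals.
From mathcomp Require Import topology_structure product_topology subtype_topology subspace_topology
  function_spaces topology normedtype.
From mathcomp Require Import zify ring lra.
Set Implicit Arguments. Unset Strict Implicit. Unset Printing Implicit Defensive.
Import Order.TTheory GRing.Theory Num.Theory.
Import numFieldNormedType.Exports.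
Local Open Scope classical_set_scope.
Local Open Scope ring_scope.

(* Let v := a_{t-1} and let p_0, ..., p_{2n-2} be the path b_{t,1}, ..., b_{t,n-1},
   a_t, c_{t,n-1}, ..., c_{t,1}: with v it closes a cycle, and the inner vertices
   p_1, ..., p_{2n-3} have no other neighbours.  If N(u) ⊆ N(v) ∪ N(x), the
   straight-line homotopy on the realization that moves the weight min(f v, f x)
   from both v and x onto u ends in points where v and x never both carry weight,
   i.e. in the realization of I(G + vx); so edges may be added one at a time.
   For k = 1, ..., 2m take u = p_{3k-2} and x = p_{3k}: the neighbour p_{3k-1} of u
   is adjacent to x, and p_{3k-3} is p_0 or was joined to v at step k - 1.  After
   these 2m edges, w = p_{6m+1} has N(w) = {p_{6m}, p_{6m+2}} ⊆ N(v), and moving all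
   the weight of v onto w retracts onto |I(G \ v)|.  Running the 2m + 1 moves one
   after the other inside a single homotopy avoids composing homotopy equivalences. *)

Section Simplex.
Variables (R : realType) (T : finType).
Implicit Types (r : rel T) (f g : T -> R).

Definition in_simplex f := (forall z, 0 <= f z) /\ \sum_z f z = 1.

Definition indep_support r f := forall a b, f a != 0 -> f b != 0 -> ~~ r a b.

Lemma realizationP r f :
  realization R (independent r) f <-> in_simplex f /\ indep_support r f.
Proof.
rewrite /realization /in_simplex /indep_support /independent /=; split.
  move=> [f_ge0 [f_sum /forall_inP f_ind]]; split => // a b fa fb.
  move: (f_ind a); rewrite finset.in_set => /(_ fa) /forall_inP /(_ b).
  by rewrite finset.in_set => /(_ fb).
move=> [[f_ge0 f_sum] f_ind]; do 2!split => //.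
apply/forall_inP => a; rewrite finset.in_set => fa.
by apply/forall_inP => b; rewrite finset.in_set => fb; apply: f_ind.
Qed.

Lemma sum_indicator (a : T) : \sum_z ((z == a)%:R : R) = 1.
Proof. by rewrite (bigD1 a) //= eqxx big1 ?addr0 // => z /negbTE ->. Qed.

Lemma indep_support_grow r f g (v x u : T) :
  symmetric r -> ~~ r u u -> (forall y, r u y -> r v y || r x y) ->
  indep_support r f ->
  (forall z, g z != 0 -> f z != 0 \/ [/\ z = u, f v != 0 & f x != 0]) ->
  indep_support r g.
Proof.
move=> r_sym ruu Nu f_ind g_supp a b ga gb.
have u_free y : f v != 0 -> f x != 0 -> f y != 0 -> ~~ r u y.
  by move=> fv fx fy; apply/negP => /Nu /orP[]; apply/negP; apply: f_ind.
case: (g_supp a ga) => [fa | [-> fv fx]]; case: (g_supp b gb) => [fb | [-> fv' fx']].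
- exact: f_ind.
- by rewrite r_sym; apply: u_free.
- exact: u_free.
- exact: ruu.
Qed.

Lemma neq0_of_subr (a c : R) : 0 <= c -> c <= a -> a - c != 0 -> a != 0.
Proof.
move=> c_ge0 ca; apply: contraNneq => a0; move: ca; rewrite a0 => c_le0.
by rewrite sub0r oppr_eq0 eq_le c_le0 c_ge0.
Qed.

Definition transfer (v x u : T) (lam : R) f : T -> R :=
  fun z => f z + lam * Num.min (f v) (f x) *
                 ((z == u)%:R *+ 2 - (z == v)%:R - (z == x)%:R).

Definition fold_onto (v w : T) (lam : R) f : T -> R :=
  fun z => f z + lam * f v * ((z == w)%:R - (z == v)%:R).

Lemma transfer0 v x u f : transfer v x u 0 f = f.
Proof. by apply/funext => z; rewrite /transfer !mul0r addr0. Qed.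

Lemma fold_onto0 v w f : fold_onto v w 0 f = f.
Proof. by apply/funext => z; rewrite /fold_onto !mul0r addr0. Qed.

Lemma transfer_id v x u lam f :
  (forall z, 0 <= f z) -> f v = 0 -> transfer v x u lam f = f.
Proof.
move=> f_ge0 fv; apply/funext => z.
by rewrite /transfer fv (min_idPl (f_ge0 x)) mulr0 mul0r addr0.
Qed.

Lemma fold_onto_id v w lam f : f v = 0 -> fold_onto v w lam f = f.
Proof. by move=> fv; apply/funext => z; rewrite /fold_onto fv mulr0 mul0r addr0. Qed.

Section Transfer.
Variables (v x u : T) (lam : R) (f : T -> R).
Hypotheses (uv : u != v) (ux : u != x) (xv : x != v).
Hypotheses (lam_ge0 : 0 <= lam) (lam_le1 : lam <= 1) (f_simplex : in_simplex f).

Let f_ge0 : forall z, 0 <= f z. Proof. by case: f_simplex. Qed.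

Let c := lam * Num.min (f v) (f x).

Let c_ge0 : 0 <= c.
Proof. by rewrite mulr_ge0 // le_min !f_ge0. Qed.

Let c_le : c <= f v /\ c <= f x.
Proof.
have c_min : c <= Num.min (f v) (f x) by rewrite /c ler_piMl // le_min !f_ge0.
by move: c_min; rewrite le_min => /andP.
Qed.

Let c_support : c != 0 -> f v != 0 /\ f x != 0.
Proof.
move=> c_neq0; have c_gt0 : 0 < c by rewrite lt_def c_neq0 c_ge0.
by case: c_le => cv cx; split; rewrite gt_eqF // (lt_le_trans c_gt0).
Qed.

Lemma transferE z : transfer v x u lam f z =
  if z == u then f u + c *+ 2 else if z == v then f v - c
  else if z == x then f x - c else f z.
Proof.
rewrite /transfer -/c.
have [->|zu] := eqVneq z u; first by rewrite (negbTE uv) (negbTE ux) /=; ring.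
have [->|zv] := eqVneq z v; first by rewrite eq_sym (negbTE xv) /=; ring.
have [->|zx] := eqVneq z x; by rewrite /=; ring.
Qed.

Lemma transfer_in_simplex : in_simplex (transfer v x u lam f).
Proof.
have [_ f_sum] := f_simplex; split.
  case: c_le => cv cx z; rewrite transferE.
  by do ?case: ifP => _; rewrite ?subr_ge0 ?addr_ge0 ?mulrn_wge0.
rewrite /transfer big_split /= f_sum -big_distrr /= !sumrB sumrMnl !sum_indicator.
by ring.
Qed.

Lemma transfer_indep_support r :
  symmetric r -> ~~ r u u -> (forall y, r u y -> r v y || r x y) ->
  indep_support r f -> indep_support r (transfer v x u lam f).
Proof.
move=> r_sym ruu Nu f_ind; apply: (indep_support_grow r_sym ruu Nu f_ind) => z.
case: c_le => cv cx; rewrite transferE.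
have [->|zu] := eqVneq z u.
  have [fu0|] := eqVneq (f u) 0; last by left.
  rewrite fu0 add0r => c2.
  have c_neq0 : c != 0 by apply: contraNneq c2 => ->; rewrite mul0rn.
  by have [fv fx] := c_support c_neq0; right.
have [->|_] := eqVneq z v; first by move/(neq0_of_subr c_ge0 cv); left.
have [->|_] := eqVneq z x; first by move/(neq0_of_subr c_ge0 cx); left.
by left.
Qed.

Lemma transfer1_vanish : lam = 1 ->
  transfer v x u lam f v = 0 \/ transfer v x u lam f x = 0.
Proof.
move=> lam1; rewrite !transferE eqxx eq_sym (negbTE uv) eq_sym (negbTE ux).
rewrite (negbTE xv) eqxx /c lam1 mul1r.
by case: leP => _; [left|right]; rewrite subrr.
Qed.
End Transfer.

Section Fold.
Variables (v w : T) (lam : R) (f : T -> R).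
Hypotheses (wv : w != v) (lam_ge0 : 0 <= lam) (lam_le1 : lam <= 1).
Hypothesis f_simplex : in_simplex f.

Let f_ge0 : forall z, 0 <= f z. Proof. by case: f_simplex. Qed.

Let c := lam * f v.

Let c_ge0 : 0 <= c. Proof. by rewrite mulr_ge0. Qed.

Let c_le : c <= f v. Proof. by rewrite /c ler_piMl. Qed.

Lemma fold_ontoE z : fold_onto v w lam f z =
  if z == w then f w + c else if z == v then f v - c else f z.
Proof.
rewrite /fold_onto -/c.
have [->|zw] := eqVneq z w; first by rewrite (negbTE wv) /=; ring.
have [->|zv] := eqVneq z v; by rewrite /=; ring.
Qed.

Lemma fold_onto_in_simplex : in_simplex (fold_onto v w lam f).
Proof.
have [_ f_sum] := f_simplex; split.
  by move=> z; rewrite fold_ontoE; do ?case: ifP => _; rewrite ?subr_ge0 ?addr_ge0.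
rewrite /fold_onto big_split /= f_sum -big_distrr /= sumrB !sum_indicator.
by ring.
Qed.

Lemma fold_onto_indep_support r :
  symmetric r -> ~~ r w w -> (forall y, r w y -> r v y) ->
  indep_support r f -> indep_support r (fold_onto v w lam f).
Proof.
move=> r_sym rww Nw f_ind.
have Nw' y : r w y -> r v y || r v y by move/Nw ->.
apply: (indep_support_grow r_sym rww Nw' f_ind) => z; rewrite fold_ontoE.
have [->|zw] := eqVneq z w.
  have [fw0|] := eqVneq (f w) 0; last by left.
  rewrite fw0 add0r => c_neq0.
  have fv : f v != 0 by apply: contraNneq c_neq0 => fv0; rewrite /c fv0 mulr0.
  by right.
have [->|_] := eqVneq z v; first by move/(neq0_of_subr c_ge0 c_le); left.
by left.
Qed.

Lemma fold_onto1_vanish : lam = 1 -> fold_onto v w lam f v = 0.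
Proof.
by move=> lam1; rewrite fold_ontoE eq_sym (negbTE wv) eqxx /c lam1 mul1r subrr.
Qed.
End Fold.
End Simplex.

Section RealContinuity.
Variables (R : realType) (Z : topologicalType).
Implicit Types f g : Z -> R.

Lemma continuous_addr f g :
  continuous f -> continuous g -> continuous (fun z => f z + g z).
Proof. by move=> cf cg z; exact: (continuousD (cf z) (cg z)). Qed.

Lemma continuous_subr f g :
  continuous f -> continuous g -> continuous (fun z => f z - g z).
Proof. by move=> cf cg z; exact: (continuousB (cf z) (cg z)). Qed.

Lemma continuous_mulr f g :
  continuous f -> continuous g -> continuous (fun z => f z * g z).
Proof. by move=> cf cg z; exact: (continuousM (cf z) (cg z)). Qed.

Lemma continuous_minr f g :
  continuous f -> continuous g -> continuous (fun z => Num.min (f z) (g z)).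
Proof. by move=> cf cg z; exact: (@continuous_min R Z f g z (cf z) (cg z)). Qed.

Lemma continuous_maxr f g :
  continuous f -> continuous g -> continuous (fun z => Num.max (f z) (g z)).
Proof. by move=> cf cg z; exact: (@continuous_max R Z f g z (cf z) (cg z)). Qed.
End RealContinuity.

Lemma ptws_continuous (R : realType) (Z : topologicalType) (I : Type)
    (g : Z -> {ptws I -> R}) :
  (forall i, continuous (fun z => g z i)) -> continuous g.
Proof.
move=> cg z; apply/cvg_sup => i A /= [B [[C oC <-] /= Cgz] BA].
apply: (@filterS _ _ _ ((fun z => g z i) @^-1` C)); first by move=> y /BA.
by apply: cg; exact: open_nbhs_nbhs.
Qed.

Lemma continuous_eval (R : realType) (I : eqType) (i : I) :
  continuous (fun f : {ptws I -> R} => f i).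
Proof. exact: (@proj_continuous I (fun _ => R) i). Qed.

Section Clamp.
Variable R : realType.
Implicit Type a : R.

Definition clamp a := Num.min 1 (Num.max 0 a).

Lemma clamp_ge0 a : 0 <= clamp a.
Proof. by rewrite le_min ler01 le_max lexx. Qed.

Lemma clamp_le1 a : clamp a <= 1.
Proof. by rewrite ge_min lexx. Qed.

Lemma clamp_id1 a : 1 <= a -> clamp a = 1.
Proof. by move=> a1; rewrite /clamp (max_idPr (le_trans ler01 a1)) (min_idPl a1). Qed.

Lemma clamp_id0 a : a <= 0 -> clamp a = 0.
Proof. by move=> a0; rewrite /clamp (max_idPl a0) (min_idPr ler01). Qed.

Lemma clamp_continuous (Z : topologicalType) (f : Z -> R) :
  continuous f -> continuous (fun z => clamp (f z)).
Proof.
move=> cf; apply: continuous_minr; first exact: cst_continuous.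
by apply: continuous_maxr => //; exact: cst_continuous.
Qed.
End Clamp.

Lemma sum_sub_neq (R : realType) (T : finType) (v : T) (F : T -> R) :
  \sum_(a : {x : T | x != v}) F (val a) = \sum_(z | z != v) F z.
Proof. exact: (esym (big_sub (predC1 v) F)). Qed.

Lemma indep_complex_point (R : realType) (T : finType) (r : rel T)
    (x : indep_complex_space R r) :
  in_simplex (set_val x) /\ indep_support r (set_val x).
Proof. by case: x => f f_real; apply/realizationP; rewrite set_valE; apply: set_mem. Qed.

Section Deformation.
Variables (R : realType) (T : finType) (e : rel T) (v : T).
Hypothesis e_sym : symmetric e.
Variables (xs us : nat -> T) (K : nat) (w : T).

Fixpoint augment (k : nat) : rel T :=
  match k with
  | 0 => e
  | k.+1 => fun a b =>
      [|| augment k a b, (a == v) && (b == xs k.+1) | (b == v) && (a == xs k.+1)]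
  end.

Lemma augment_sym k : symmetric (augment k).
Proof.
elim: k => [|k IH] a b //=; rewrite IH; congr (_ || _); exact: orbC.
Qed.

Lemma augment_of_edge k a b : e a b -> augment k a b.
Proof. by elim: k => [|k IH] //= /IH ->. Qed.

Lemma augment_v_xs k j : (0 < j <= k)%N -> augment k v (xs j).
Proof.
elim: k => [|k IH] /= j_le; first lia.
have [->|jk] := eqVneq j k.+1; first by rewrite !eqxx orbT.
by rewrite IH //; lia.
Qed.

Lemma augment_off_v k a b : a != v -> (forall j, (0 < j <= k)%N -> a != xs j) ->
  augment k a b -> e a b.
Proof.
move=> av; elim: k => [|k IH] a_xs //=.
case/or3P => [|/andP[/eqP ea _]|/andP[_ /eqP ea]].
- by apply: IH => j j_le; apply: a_xs; lia.
- by rewrite ea eqxx in av.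
- by have /negP[] := a_xs k.+1 (leqnn _); rewrite ea.
Qed.

Lemma indep_support_augment k (f : T -> R) :
  indep_support (augment k) f -> indep_support e f.
Proof. by move=> f_ind a b fa fb; apply: contraNN (f_ind a b fa fb); apply: augment_of_edge. Qed.

Hypothesis transfer_step : forall k, (k < K)%N ->
  [/\ us k.+1 != v, us k.+1 != xs k.+1, xs k.+1 != v,
      ~~ augment k (us k.+1) (us k.+1) &
      forall y, augment k (us k.+1) y -> augment k v y || augment k (xs k.+1) y].
Hypothesis fold_step :
  [/\ w != v, ~~ augment K w w & forall y, augment K w y -> augment K v y].

(* For s in [0, 1], move j runs while s is in [(j - 1) / (K + 1), j / (K + 1)]. *)
Definition phase (s : R) (j : nat) : R := clamp (K.+1%:R * s - j.-1%:R).

Fixpoint moves (s : R) (k : nat) (f : T -> R) : T -> R :=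
  match k with
  | 0 => f
  | k.+1 => transfer v (xs k.+1) (us k.+1) (phase s k.+1) (moves s k f)
  end.

Definition deform (s : R) (f : T -> R) : T -> R :=
  fold_onto v w (phase s K.+1) (moves s K f).

Lemma phase_ge0 s j : 0 <= phase s j. Proof. exact: clamp_ge0. Qed.

Lemma phase_le1 s j : phase s j <= 1. Proof. exact: clamp_le1. Qed.

Lemma phase_prev_done s k :
  phase s k.+1 != 0 -> (k == 0)%N || (phase s k == 1).
Proof.
case: k => [//|k]; rewrite /phase /= => phase_neq0; apply/eqP/clamp_id1.
have : 0 < K.+1%:R * s - k.+1%:R.
  by rewrite ltNge; apply: contraNN phase_neq0 => /clamp_id0 ->.
by rewrite -addn1 natrD /=; lra.
Qed.

Lemma moves_ok s k (f : T -> R) : (k <= K)%N ->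
  in_simplex f -> indep_support e f ->
  [/\ in_simplex (moves s k f), indep_support e (moves s k f) &
      (k == 0)%N || (phase s k == 1) -> indep_support (augment k) (moves s k f)].
Proof.
move=> + f_simplex f_ind; elim: k => [|k IH] kK; first by split.
have [g_simplex g_ind g_aug] := IH (ltnW kK).
have [uv ux xv uu Nu] := transfer_step kK.
rewrite /=; set g := moves s k f.
have [->|phase_neq0] := eqVneq (phase s k.+1) 0.
  by rewrite transfer0; split => //; rewrite /= eq_sym oner_eq0.
have g_augk := g_aug (phase_prev_done phase_neq0).
have ph_ge0 := phase_ge0 s k.+1; have ph_le1 := phase_le1 s k.+1.
have h_ind := transfer_indep_support uv ux xv ph_ge0 ph_le1 g_simplex
  (@augment_sym k) uu Nu g_augk.
split; first exact: transfer_in_simplex.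
  exact: indep_support_augment h_ind.
move=> /= /eqP /(transfer1_vanish g uv ux xv) vanish a b ha hb /=.
rewrite negb_or (h_ind a b ha hb) /= negb_or.
by apply/andP; split; apply/negP => /andP[/eqP ea /eqP eb]; move: ha hb;
  rewrite ea eb; case: vanish => ->; rewrite eqxx.
Qed.

Lemma deform_ok s (f : T -> R) : in_simplex f -> indep_support e f ->
  in_simplex (deform s f) /\ indep_support e (deform s f).
Proof.
move=> f_simplex f_ind; have [g_simplex g_ind g_aug] := moves_ok s (leqnn K) f_simplex f_ind.
rewrite /deform; have [->|phase_neq0] := eqVneq (phase s K.+1) 0.
  by rewrite fold_onto0.
have [wv ww Nw] := fold_step.
have ph_ge0 := phase_ge0 s K.+1; have ph_le1 := phase_le1 s K.+1.
split; first exact: fold_onto_in_simplex.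
apply: (@indep_support_augment K).
exact: fold_onto_indep_support (@augment_sym K) ww Nw (g_aug (phase_prev_done phase_neq0)).
Qed.

Lemma deform1_vanish (f : T -> R) : deform 1 f v = 0.
Proof.
have [wv _ _] := fold_step; apply: fold_onto1_vanish => //.
by apply: clamp_id1; rewrite /= mulr1 -natr1 addrAC subrr add0r.
Qed.

Lemma deform0 (f : T -> R) : deform 0 f = f.
Proof.
have phase0 j : phase 0 j = 0 by rewrite /phase mulr0 sub0r clamp_id0 // oppr_le0.
by rewrite /deform phase0 fold_onto0; elim: K => [|k IH] //=; rewrite phase0 transfer0.
Qed.

Lemma deform_id s (f : T -> R) : (forall z, 0 <= f z) -> f v = 0 -> deform s f = f.
Proof.
move=> f_ge0 fv; have moves_id k : moves s k f = f.
  by elim: k => [|k IH] //=; rewrite IH transfer_id.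
by rewrite /deform moves_id fold_onto_id.
Qed.

Section Continuity.
Variables (Z : topologicalType) (a : Z -> R) (b : Z -> {ptws T -> R}).
Hypotheses (a_cont : continuous a) (b_cont : continuous b).

Lemma phase_continuous j : continuous (fun z => phase (a z) j).
Proof.
apply: clamp_continuous; apply: continuous_subr; last exact: cst_continuous.
by apply: continuous_mulr => //; exact: cst_continuous.
Qed.

Lemma moves_continuous k y : continuous (fun z => moves (a z) k (b z) y).
Proof.
elim: k y => [|k IH] y /=.
  move=> z; apply: (@continuous_comp _ _ _ b (fun f : {ptws T -> R} => f y)).
    exact: b_cont.
  exact: continuous_eval.
apply: continuous_addr; first exact: IH.
apply: continuous_mulr; last exact: cst_continuous.
by apply: continuous_mulr; [exact: phase_continuous | apply: continuous_minr].
Qed.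

Lemma deform_continuous y : continuous (fun z => deform (a z) (b z) y).
Proof.
apply: continuous_addr; first exact: moves_continuous.
apply: continuous_mulr; last exact: cst_continuous.
by apply: continuous_mulr; [exact: phase_continuous | exact: moves_continuous].
Qed.
End Continuity.

Local Notation T' := {x : T | x != v}.
Local Notation X := (indep_complex_space R e).
Local Notation Y := (indep_complex_space R (del_vertex e v)).

Definition restrict (f : T -> R) : {ptws T' -> R} := fun a => f (val a).

Definition extend (g : T' -> R) : {ptws T -> R} := fun z => oapp g 0 (insub z).

Lemma extend_restrict (f : T -> R) : f v = 0 -> extend (restrict f) = f.
Proof.
move=> fv; apply/funext => z; rewrite /extend /restrict.
by case: insubP => [a _ <- //|]; rewrite negbK => /eqP ->.
Qed.

Lemma restrict_extend (g : T' -> R) : restrict (extend g) = g.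
Proof. by apply/funext => a; rewrite /restrict /extend valK. Qed.

Lemma extend_vanish (g : T' -> R) : extend g v = 0.
Proof. by rewrite /extend insubF ?eqxx. Qed.

Lemma extend_ge0 (g : T' -> R) : (forall a, 0 <= g a) -> forall z, 0 <= extend g z.
Proof. by move=> g_ge0 z; rewrite /extend; case: insubP => [a _ _ /=|_ /=]. Qed.

Lemma extend_neq0 (g : T' -> R) z : extend g z != 0 -> exists2 a : T', val a = z & g a != 0.
Proof. by rewrite /extend; case: insubP => [a _ <- /= ga|_ /=]; [exists a | rewrite eqxx]. Qed.

Lemma deform_mem s (x : X) :
  (deform s (set_val x) : {ptws T -> R}) \in realization R (independent e).
Proof.
have [x_simplex x_ind] := indep_complex_point x.
by apply/mem_set/realizationP; apply: deform_ok.
Qed.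

Lemma restrict_deform1_mem (x : X) :
  restrict (deform 1 (set_val x)) \in realization R (independent (del_vertex e v)).
Proof.
have [x_simplex x_ind] := indep_complex_point x.
have [[g_ge0 g_sum] g_ind] := deform_ok 1 x_simplex x_ind.
apply/mem_set/realizationP; split; first split.
- by move=> a; apply: g_ge0.
- by rewrite /restrict sum_sub_neq; move: g_sum; rewrite (bigD1 v) //= deform1_vanish add0r.
- by move=> a b ha hb; apply: g_ind.
Qed.

Lemma extend_mem (y : Y) : extend (set_val y) \in realization R (independent e).
Proof.
have [[y_ge0 y_sum] y_ind] := indep_complex_point y.
apply/mem_set/realizationP; split; first split.
- exact: extend_ge0.
- rewrite (bigD1 v) //= extend_vanish add0r -sum_sub_neq -y_sum.
  by apply: eq_bigr => a _; rewrite /extend valK.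
- by move=> a b /extend_neq0 [a' <- ha] /extend_neq0 [b' <- hb]; apply: y_ind.
Qed.

Definition retraction (x : X) : Y :=
  exist _ (restrict (deform 1 (set_val x))) (restrict_deform1_mem x).

Definition inclusion (y : Y) : X := exist _ (extend (set_val y)) (extend_mem y).

Definition homotopy (q : R * X) : X :=
  exist _ (deform (1 - q.1) (set_val q.2)) (deform_mem (1 - q.1) q.2).

Lemma retraction_continuous : continuous retraction.
Proof.
apply: continuous_comp_initial; apply: ptws_continuous => a.
by apply: deform_continuous; [exact: cst_continuous | exact: initial_continuous].
Qed.

Lemma inclusion_continuous : continuous inclusion.
Proof.
apply: continuous_comp_initial; rewrite set_valE /=.
apply: ptws_continuous => z /=; rewrite /extend.
case: insubP => [a _ _ | _] /=; last exact: cst_continuous.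
move=> y; apply: (@continuous_comp _ _ _ set_val (fun f : {ptws T' -> R} => f a)).
  exact: initial_continuous.
exact: continuous_eval.
Qed.

Lemma homotopy_continuous : continuous homotopy.
Proof.
apply: continuous_comp_initial; apply: ptws_continuous => z.
apply: deform_continuous.
  by apply: continuous_subr; [exact: cst_continuous | move=> q; exact: cvg_fst].
move=> q; apply: (@continuous_comp _ _ _ snd set_val); first exact: cvg_snd.
exact: initial_continuous.
Qed.

Theorem homotopy_equivalent_del_vertex : homotopy_equivalent R X Y.
Proof.
exists retraction, inclusion; split; first exact: retraction_continuous.
split; first exact: inclusion_continuous.
split.
- exists homotopy; split; first exact: continuous_subspaceT homotopy_continuous.
  split => x; apply: val_inj; rewrite /= ?set_valE /=.
    by rewrite subr0 extend_restrict // deform1_vanish.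
  by rewrite subrr deform0.
- exists snd; split.
    by apply: continuous_subspaceT => q; exact: cvg_snd.
  split => y //; apply: val_inj; rewrite /= ?set_valE /=.
  have [[y_ge0 _] _] := indep_complex_point y.
  by rewrite deform_id ?restrict_extend ?extend_vanish //; exact: extend_ge0.
Qed.
End Deformation.

Lemma Gedge_sym n t : symmetric (Gedge n t).
Proof. by move=> a b; rewrite /Gedge orbC. Qed.

Lemma Gedge_irr n t (a : Gvert n t) : ~~ Gedge n t a a.
Proof.
rewrite /Gedge orbb; case: a => [k|[[a j] s]] //=.
rewrite !eqxx /=; apply/negP; case/orP => [/eqP|/andP[/andP[/eqP ii _] _]]; lia.
Qed.

Section LastBlock.
Local Open Scope nat_scope.
Variables (N t : nat).
Local Notation V := (Gvert N.+2 t.+1).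
Local Notation E := (Gedge N.+2 t.+1).

(* The path b_{t+1,1}, ..., b_{t+1,N+1}, a_{t+1}, c_{t+1,N+1}, ..., c_{t+1,1},
   indexed by 0, ..., 2N+2; together with a_t it forms a cycle. *)
Definition path_vertex (i : nat) : V :=
  if i <= N then inr (inord t, inord i, true)
  else if i == N.+1 then inl (inord t.+1)
  else inr (inord t, inord (2 * N + 2 - i), false).

Definition pivot : V := inl (inord t).

Lemma path_vertex_b i : i <= N -> path_vertex i = inr (inord t, inord i, true).
Proof. by rewrite /path_vertex => ->. Qed.

Lemma path_vertex_a : path_vertex N.+1 = inl (inord t.+1).
Proof. by rewrite /path_vertex ltnn eqxx. Qed.

Lemma path_vertex_c i :
  N.+1 < i -> path_vertex i = inr (inord t, inord (2 * N + 2 - i), false).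
Proof.
move=> Ni; rewrite /path_vertex ifF; last by apply/negbTE; rewrite -ltnNge; lia.
by rewrite ifF //; apply/eqP; lia.
Qed.

Lemma last_block_path_vertex (a : 'I_t.+1) (j : 'I_N.+1) s : val a = t ->
  (inr (a, j, s) : V) = path_vertex (if s then val j else 2 * N + 2 - val j).
Proof.
move=> at_; have jN := ltn_ord j.
have -> : a = inord t by apply: val_inj; rewrite /= inordK // at_.
case: s => /=; first by rewrite path_vertex_b ?inord_val.
rewrite path_vertex_c; last lia.
by congr (inr (_, _, _)); apply: val_inj; rewrite /= inordK; lia.
Qed.

Lemma a_path_vertex (k : 'I_t.+2) : val k = t.+1 -> (inl k : V) = path_vertex N.+1.
Proof. by move=> kt; rewrite path_vertex_a; congr inl; apply: val_inj; rewrite /= inordK // kt. Qed.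

Lemma val_inord_t : (inord t : 'I_t.+1) = t :> nat. Proof. by rewrite inordK. Qed.
Lemma val_inord_t_wide : (inord t : 'I_t.+2) = t :> nat. Proof. by rewrite inordK // ltnW. Qed.
Lemma val_inord_t1 : (inord t.+1 : 'I_t.+2) = t.+1 :> nat. Proof. by rewrite inordK. Qed.

Local Ltac adjacent_index := first [ by left; congr path_vertex; lia | by right; congr path_vertex; lia ].

Lemma path_vertex_nbr_a i (k : 'I_t.+2) : 0 < i <= 2 * N + 1 ->
  E (path_vertex i) (inl k) -> inl k = path_vertex i.-1 \/ inl k = path_vertex i.+1.
Proof.
move=> hi; have ka := ltn_ord k.
case: (leqP i N) => h1; [|case: (eqVneq i N.+1) => [->|h2]].
- rewrite (path_vertex_b h1) /Gedge /Gadj /= val_inord_t inordK //.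
  case/orP => /andP [/eqP e1 /eqP e2]; first lia.
  rewrite (a_path_vertex e1); adjacent_index.
- by rewrite path_vertex_a /Gedge /Gadj /=.
- have h3 : N.+1 < i by lia.
  rewrite (path_vertex_c h3) /Gedge /Gadj /= val_inord_t inordK; last lia.
  case/orP => /andP [/eqP e1 /eqP e2]; first lia.
  rewrite (a_path_vertex e1); adjacent_index.
Qed.

Lemma path_vertex_nbr_bc i a j s : 0 < i <= 2 * N + 1 ->
  E (path_vertex i) (inr (a, j, s)) ->
  inr (a, j, s) = path_vertex i.-1 \/ inr (a, j, s) = path_vertex i.+1.
Proof.
move=> hi; have ha := ltn_ord a; have hj := ltn_ord j.
case: (leqP i N) => h1; [|case: (eqVneq i N.+1) => [->|h2]].
- rewrite (path_vertex_b h1) /Gedge /Gadj /= val_inord_t inordK //.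
  case/orP => /andP [/eqP es]; subst s.
  + case/orP => [/andP [/eqP e1 /eqP e2]|/andP [/andP [/eqP e1 /eqP e2] /eqP e3]]; last lia.
    rewrite (last_block_path_vertex _ _ (esym e1)) /=; adjacent_index.
  + case/orP => [/andP [/eqP e1 /eqP e2]|/andP [/andP [/eqP e1 /eqP e2] /eqP e3]]; last lia.
    rewrite (last_block_path_vertex _ _ e1) /=; adjacent_index.
- rewrite path_vertex_a /Gedge /Gadj /= val_inord_t1 orbF.
  case/orP => /andP [/eqP e1 /eqP e2]; first lia.
  have e1' : (a : nat) = t by lia.
  rewrite (last_block_path_vertex _ _ e1'); case: s; rewrite /=; adjacent_index.
- have h3 : N.+1 < i by lia.
  rewrite (path_vertex_c h3) /Gedge /Gadj /= val_inord_t inordK; last lia.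
  case/orP => /andP [/eqP es]; subst s.
  + case/orP => [/andP [/eqP e1 /eqP e2]|/andP [/andP [/eqP e1 /eqP e2] /eqP e3]]; last lia.
    rewrite (last_block_path_vertex _ _ (esym e1)) /=; adjacent_index.
  + case/orP => [/andP [/eqP e1 /eqP e2]|/andP [/andP [/eqP e1 /eqP e2] /eqP e3]]; last lia.
    rewrite (last_block_path_vertex _ _ e1) /=; adjacent_index.
Qed.

Lemma path_vertex_nbr i y : 0 < i <= 2 * N + 1 ->
  E (path_vertex i) y -> y = path_vertex i.-1 \/ y = path_vertex i.+1.
Proof. by case: y => [k | [[a j] s]]; [exact: path_vertex_nbr_a | exact: path_vertex_nbr_bc]. Qed.

Lemma path_vertex_adj i : i <= 2 * N + 1 -> E (path_vertex i) (path_vertex i.+1).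
Proof.
move=> hi; case: (ltngtP i N) => h1.
- rewrite (path_vertex_b (ltnW h1)) (path_vertex_b h1) /Gedge /Gadj /= val_inord_t.
  by rewrite !inordK //; [lia | rewrite ltnS ltnW].
- case: (eqVneq i N.+1) => [->|h2].
    by rewrite path_vertex_a path_vertex_c // /Gedge /Gadj /= val_inord_t val_inord_t1 inordK; lia.
  rewrite !path_vertex_c; try lia.
  by rewrite /Gedge /Gadj /= val_inord_t !inordK; lia.
- rewrite h1 (path_vertex_b (leqnn N)) path_vertex_a /Gedge /Gadj /= val_inord_t val_inord_t1.
  by rewrite inordK //; lia.
Qed.

Lemma pivot_adj_first : E pivot (path_vertex 0).
Proof. by rewrite path_vertex_b // /Gedge /Gadj /pivot /= val_inord_t val_inord_t_wide inordK //; lia. Qed.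

Lemma pivot_adj_last : E pivot (path_vertex (2 * N + 2)).
Proof.
rewrite path_vertex_c; last lia.
by rewrite /Gedge /Gadj /pivot /= val_inord_t val_inord_t_wide inordK; lia.
Qed.

Definition path_index (y : V) : nat :=
  match y with
  | inl _ => N.+1
  | inr (a, j, s) => if s then val j else 2 * N + 2 - val j
  end.

Lemma path_vertexK i : i <= 2 * N + 2 -> path_index (path_vertex i) = i.
Proof.
move=> hi; case: (leqP i N) => h1; first by rewrite path_vertex_b //= inordK.
case: (eqVneq i N.+1) => [->|h2]; first by rewrite path_vertex_a.
by rewrite path_vertex_c /=; [rewrite inordK|]; lia.
Qed.

Lemma path_vertex_inj i j : i <= 2 * N + 2 -> j <= 2 * N + 2 ->
  path_vertex i = path_vertex j -> i = j.
Proof. by move=> hi hj eq_ij; rewrite -(path_vertexK hi) -(path_vertexK hj) eq_ij. Qed.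

Lemma path_vertex_neq_pivot i : i <= 2 * N + 2 -> path_vertex i != pivot.
Proof.
move=> hi; case: (leqP i N) => h1; first by rewrite path_vertex_b.
case: (eqVneq i N.+1) => [->|h2]; last by rewrite path_vertex_c //; lia.
rewrite path_vertex_a /pivot; apply/negP => /eqP [] /(congr1 val) /=.
by rewrite !inordK //; lia.
Qed.
End LastBlock.

Section Steps.
Local Open Scope nat_scope.
Variables (m t : nat).
Local Notation N := (3 * m).
Local Notation p := (path_vertex N t).
Local Notation E := (Gedge N.+2 t.+1).
Local Notation aug := (augment E (pivot N t) (fun k => p (3 * k))).

Lemma aug_pivot k j : j <= k -> aug k (pivot N t) (p (3 * j)).
Proof.
case: j => [_|j jk]; first exact/augment_of_edge/pivot_adj_first.
by apply: augment_v_xs; lia.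
Qed.

Lemma aug_path_vertex k i y : k <= 2 * m -> i <= 2 * N + 2 ->
  (forall j, 0 < j <= k -> i != 3 * j) -> aug k (p i) y -> E (p i) y.
Proof.
move=> k_le i_le i_not3; apply: augment_off_v; first exact: path_vertex_neq_pivot.
move=> j j_le; apply: contraNneq (i_not3 j j_le) => /(path_vertex_inj i_le) -> //.
lia.
Qed.

Lemma cycle_transfer_step k : k < 2 * m ->
  [/\ p (3 * k).+1 != pivot N t, p (3 * k).+1 != p (3 * k.+1),
      p (3 * k.+1) != pivot N t, ~~ aug k (p (3 * k).+1) (p (3 * k).+1) &
      forall y, aug k (p (3 * k).+1) y ->
        aug k (pivot N t) y || aug k (p (3 * k.+1)) y].
Proof.
move=> km; have u_off y : aug k (p (3 * k).+1) y -> E (p (3 * k).+1) y.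
  by apply: aug_path_vertex => [||j]; lia.
split.
- by apply: path_vertex_neq_pivot; lia.
- by apply/eqP => /path_vertex_inj; lia.
- by apply: path_vertex_neq_pivot; lia.
- by apply/negP => /u_off; apply/negP; exact: Gedge_irr.
- move=> y /u_off /path_vertex_nbr [|->|->]; first lia.
    by rewrite aug_pivot.
  apply/orP; right; apply: augment_of_edge; rewrite Gedge_sym.
  have -> : 3 * k.+1 = (3 * k).+2.+1 by lia.
  by apply: path_vertex_adj; lia.
Qed.

Lemma cycle_fold_step :
  [/\ p (2 * N + 1) != pivot N t, ~~ aug (2 * m) (p (2 * N + 1)) (p (2 * N + 1)) &
      forall y, aug (2 * m) (p (2 * N + 1)) y -> aug (2 * m) (pivot N t) y].
Proof.
have w_off y : aug (2 * m) (p (2 * N + 1)) y -> E (p (2 * N + 1)) y.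
  by apply: aug_path_vertex => [||j]; lia.
split.
- by apply: path_vertex_neq_pivot; lia.
- by apply/negP => /w_off; apply/negP; exact: Gedge_irr.
- move=> y /w_off /path_vertex_nbr [|->|->]; first lia.
    have -> : (2 * N + 1).-1 = 3 * (2 * m) by lia.
    exact: aug_pivot.
  apply: augment_of_edge.
  have -> : (2 * N + 1).+1 = 2 * N + 2 by lia.
  exact: pivot_adj_last.
Qed.
End Steps.

Theorem lemma3p4 (R : realType) (m t : nat) : (1 <= t)%N ->
  homotopy_equivalent R
    (indep_complex_space R (Gedge (3 * m + 2) t))
    (indep_complex_space R (del_vertex (Gedge (3 * m + 2) t) (Ga (3 * m + 2) t t.-1))).
Proof.
case: t => [//|t] _; rewrite addn2.
apply: (@homotopy_equivalent_del_vertex R _ _ (pivot (3 * m) t) (@Gedge_sym _ _)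
  (fun k => path_vertex (3 * m) t (3 * k)) (fun k => path_vertex (3 * m) t (3 * k.-1).+1)
  (2 * m) (path_vertex (3 * m) t (2 * (3 * m) + 1))).
- exact: cycle_transfer_step.
- exact: cycle_fold_step.
Qed.
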